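(* Let $w:=3/\sqrt{2}$, and for $t\in[0,w]$ let $x:=-t+wi$ and $X:=1/x$. Define $$G_5:=X+qX^2+q^3X^3+q^6X^4+q^{10}X^5,\qquad G_*:=\sum_{j=5}^{\infty}q^{j(j+1)/2}X^{j+1}.$$ Then for all $(q,t)\in[0.6,1]\times[0,w]$ one has $|G_*|<0.0208$ and $|G_5|>0.147$.
   Context: Note $G_5+G_*=\sum_{j=-\infty}^{-1}q^{j(j+1)/2}x^j$. *)

From Stdlib Require Import Reals.
From Coquelicot Require Import Coquelicot.
Open Scope R_scope.

Definition Cpow (z : C) (n : nat) : C := @pow_n C_Ring z n.

Definition w : R := 3 / sqrt 2.

Definition Xof (t : R) : C := Cinv (RtoC (- t) + RtoC w * Ci)%C.

Definition G5 (q t : R) : C :=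
  let X := Xof t in
  (X + RtoC q * Cpow X 2 + RtoC (q ^ 3) * Cpow X 3
     + RtoC (q ^ 6) * Cpow X 4 + RtoC (q ^ 10) * Cpow X 5)%C.

(* n-th term of G_* : index j = n + 5, term q^{j(j+1)/2} X^{j+1} *)
Definition Gstar_term (q t : R) (n : nat) : C :=
  let j := (n + 5)%nat in
  (RtoC (q ^ (Nat.div (j * (j + 1)) 2)) * Cpow (Xof t) (j + 1))%C.

(** Write [s := |X|].  Since [X = 1/(-t + w i)] we have [s^2 = 1/(t^2 + 9/2)] and
    [Re X = -t s^2], so [1/3 <= s <= sqrt 2 / 3 < 0.4715].  The tail [G_*] is
    dominated by the geometric series [s^6/(1 - s)], which is small because
    [s^2 <= 2/9].  For [G_5 = X (1 + q X + Z)] with [|Z| <= s^2 + s^3 + s^4], the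
    factor [1 + q X] has real part [1 - q t s^2 >= 1 - t s^2], which gives
    [|G_5| >= s - s^3 - s^4 - s^5 - t s^3 > 0.26 - 1/9]. *)

From Pilot Require Import Defs.
From Stdlib Require Import Reals Lra Psatz.
From Coquelicot Require Import Coquelicot.
Open Scope R_scope.

Lemma series_norm_le_geom {K : AbsRing} {V : CompleteNormedModule K}
    (a : nat -> V) (c r : R) :
  0 <= r < 1 -> (forall n, norm (a n) <= c * r ^ n) ->
  exists S, is_series a S /\ norm S <= c / (1 - r).
Proof.
  intros Hr Ha.
  assert (Hgeom : is_series (fun n => c * r ^ n) (c / (1 - r))).
  { apply (is_series_scal (V := R_NormedModule) c (fun n => r ^ n)).
    apply is_series_geom. rewrite Rabs_pos_eq; lra. }
  destruct (ex_series_le a _ Ha (ex_intro _ _ Hgeom)) as [S HS].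
  exists S. split; [exact HS |].
  change (Rbar_le (norm S) (c / (1 - r))).
  apply (is_lim_seq_le (fun n => norm (sum_n a n)) (sum_n (fun n => c * r ^ n))).
  - intro n. eapply Rle_trans; [apply (norm_sum_n_m a 0 n) | apply (sum_n_m_le _ _ 0 n Ha)].
  - exact (filterlim_comp _ _ _ _ norm _ _ _ HS (filterlim_norm S)).
  - exact Hgeom.
Qed.

Lemma Cpow_Complex_Cpow (z : C) (n : nat) : Defs.Cpow z n = Complex.Cpow z n.
Proof.
  induction n as [| n IH]; [reflexivity |].
  change (Complex.Cpow z (S n)) with (z * Complex.Cpow z n)%C.
  now rewrite <- IH.
Qed.

Lemma Cmod_Cpow (z : C) (n : nat) : Cmod (Defs.Cpow z n) = Cmod z ^ n.
Proof. now rewrite Cpow_Complex_Cpow, Cmod_pow. Qed.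

Lemma pow_unit_interval (q : R) (k : nat) : 0 <= q <= 1 -> 0 <= q ^ k <= 1.
Proof.
  intros Hq. split; [apply pow_le; lra |].
  rewrite <- (pow1 k). now apply pow_incr.
Qed.

Lemma Cmod_scal_Cpow_le (q : R) (k n : nat) (X : C) : 0 <= q <= 1 ->
  Cmod (RtoC (q ^ k) * Defs.Cpow X n) <= Cmod X ^ n.
Proof.
  intros Hq. destruct (pow_unit_interval q k Hq).
  rewrite Cmod_mult, Cmod_Cpow, Cmod_R, Rabs_pos_eq by lra.
  rewrite <- (Rmult_1_l (Cmod X ^ n)) at 2.
  apply Rmult_le_compat_r; [apply pow_le, Cmod_ge_0 | lra].
Qed.

Lemma w_sqr : w ^ 2 = 9 / 2.
Proof.
  unfold w. assert (H := sqrt_lt_R0 2 ltac:(lra)).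
  replace ((3 / sqrt 2) ^ 2) with (9 / (sqrt 2 * sqrt 2)) by (field; lra).
  rewrite sqrt_sqrt; lra.
Qed.

Lemma w_pos : 0 < w.
Proof. unfold w. apply Rdiv_lt_0_compat; [lra | apply sqrt_lt_R0; lra]. Qed.

Lemma Xof_eq (t : R) : Xof t = (- t / (t ^ 2 + w ^ 2), - w / (t ^ 2 + w ^ 2)).
Proof.
  assert (Hw := w_pos).
  unfold Xof, Cinv. apply injective_projections; simpl; field; nra.
Qed.

Lemma Cmod_Xof_sqr (t : R) : Cmod (Xof t) ^ 2 * (t ^ 2 + w ^ 2) = 1.
Proof.
  assert (Hw := w_pos).
  rewrite Cmod2_alt, Xof_eq. simpl Re; simpl Im. field. nra.
Qed.

Lemma Re_Xof (t : R) : Re (Xof t) = - t * Cmod (Xof t) ^ 2.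
Proof.
  assert (Hw := w_pos).
  rewrite Cmod2_alt, Xof_eq. simpl Re; simpl Im. field. nra.
Qed.

Lemma Cmod_Xof_sqr_le (t : R) : Cmod (Xof t) ^ 2 <= 2 / 9.
Proof.
  assert (H := Cmod_Xof_sqr t). rewrite w_sqr in H.
  assert (0 <= Cmod (Xof t) ^ 2 * t ^ 2) by (apply Rmult_le_pos; apply pow2_ge_0).
  nra.
Qed.

Lemma Cmod_Xof_ge (t : R) : 0 <= t <= w -> 1 / 3 <= Cmod (Xof t).
Proof.
  intros Ht.
  assert (H := Cmod_Xof_sqr t). assert (Hw := w_sqr). assert (Hw0 := w_pos).
  assert (t ^ 2 <= w ^ 2) by (apply pow_incr; lra).
  assert (Cmod (Xof t) ^ 2 >= 1 / 9) by nra.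
  assert (Hs := Cmod_ge_0 (Xof t)). nra.
Qed.

Lemma Cmod_Gstar_term_le (q t : R) (n : nat) : 0 <= q <= 1 ->
  Cmod (Gstar_term q t n) <= Cmod (Xof t) ^ 6 * Cmod (Xof t) ^ n.
Proof.
  intros Hq. rewrite <- pow_add.
  replace (6 + n)%nat with (n + 5 + 1)%nat by lia.
  now apply Cmod_scal_Cpow_le.
Qed.

Lemma geom_tail_lt (s : R) : 0 <= s -> s ^ 2 <= 2 / 9 -> s ^ 6 / (1 - s) < 0.0208.
Proof.
  intros Hs Hs2.
  assert (Hs1 : s < 0.4715) by nra.
  assert (Hs6 : s ^ 6 <= (2 / 9) ^ 3).
  { replace (s ^ 6) with ((s ^ 2) ^ 3) by ring.
    apply pow_incr. split; [apply pow2_ge_0 | lra]. }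
  apply (Rmult_lt_reg_r (1 - s)); [lra |].
  field_simplify; lra.
Qed.

Lemma Gstar_series_small (q t : R) : 0 <= q <= 1 ->
  exists S : C, is_series (V := C_NormedModule) (Gstar_term q t) S /\ Cmod S < 0.0208.
Proof.
  intros Hq.
  assert (Hs2 := Cmod_Xof_sqr_le t).
  assert (Hs := Cmod_ge_0 (Xof t)).
  set (s := Cmod (Xof t)) in *.
  destruct (series_norm_le_geom (V := C_CompleteNormedModule) (Gstar_term q t) (s ^ 6) s)
    as [S [HS HSle]].
  - split; nra.
  - intro n. now apply Cmod_Gstar_term_le.
  - exists S. split; [exact HS |].
    eapply Rle_lt_trans; [exact HSle | now apply geom_tail_lt].
Qed.

Lemma Cmod_G5_poly_ge (q : R) (X : C) : 0 <= q <= 1 -> Re X <= 0 ->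
  Cmod X * (1 + Re X - (Cmod X ^ 2 + Cmod X ^ 3 + Cmod X ^ 4)) <=
  Cmod (X + RtoC q * Defs.Cpow X 2 + RtoC (q ^ 3) * Defs.Cpow X 3
        + RtoC (q ^ 6) * Defs.Cpow X 4 + RtoC (q ^ 10) * Defs.Cpow X 5)%C.
Proof.
  intros Hq HRe.
  set (Z := (RtoC (q ^ 3) * Defs.Cpow X 2 + RtoC (q ^ 6) * Defs.Cpow X 3
             + RtoC (q ^ 10) * Defs.Cpow X 4)%C).
  assert (Hfactor : (X + RtoC q * Defs.Cpow X 2 + RtoC (q ^ 3) * Defs.Cpow X 3
        + RtoC (q ^ 6) * Defs.Cpow X 4 + RtoC (q ^ 10) * Defs.Cpow X 5)%C
                    = (X * ((1 + RtoC q * X) + Z))%C).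
  { unfold Z. rewrite !(Cpow_Complex_Cpow X 2), !(Cpow_Complex_Cpow X 3),
      !(Cpow_Complex_Cpow X 4), (Cpow_Complex_Cpow X 5).
    simpl Complex.Cpow. ring. }
  assert (HZ : Cmod Z <= Cmod X ^ 2 + Cmod X ^ 3 + Cmod X ^ 4).
  { unfold Z.
    eapply Rle_trans; [apply Cmod_triangle |].
    eapply Rle_trans; [apply Rplus_le_compat_r, Cmod_triangle |].
    repeat apply Rplus_le_compat; now apply Cmod_scal_Cpow_le. }
  assert (Hlin : 1 + Re X <= Cmod (1 + RtoC q * X)%C).
  { eapply Rle_trans; [| apply Rle_trans with (2 := re_le_Cmod _); apply Rle_abs].
    rewrite re_plus, re_scal_l, re_RtoC. nra. }
  assert (Hrev : Cmod (1 + RtoC q * X)%C - Cmod Z <= Cmod (1 + RtoC q * X + Z)%C).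
  { rewrite <- (Cmod_opp Z).
    replace (1 + RtoC q * X)%C with ((1 + RtoC q * X + Z) + - Z)%C at 1 by ring.
    assert (H := Cmod_triangle (1 + RtoC q * X + Z) (- Z)). lra. }
  rewrite Hfactor, Cmod_mult.
  apply Rmult_le_compat_l; [apply Cmod_ge_0 | lra].
Qed.

Lemma quintic_gt (s : R) : 1 / 3 <= s -> s ^ 2 <= 2 / 9 -> 0.26 < s - s ^ 3 - s ^ 4 - s ^ 5.
Proof.
  intros H1 Hs2.
  assert (H2 : s <= 0.4715) by nra.
  assert (0 <= (s - 1 / 3) * (0.4715 - s)) by nra.
  assert (0 <= s * ((s - 1 / 3) * (0.4715 - s))) by nra.
  assert (0 <= s ^ 2 * ((s - 1 / 3) * (0.4715 - s))) by nra.
  assert (0 <= s ^ 3 * ((s - 1 / 3) * (0.4715 - s))) by (apply Rmult_le_pos; [apply pow_le |]; lra).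
  nra.
Qed.

Lemma t_mul_cube_le (s t : R) : 0 <= s -> 0 <= t -> s ^ 2 * (t ^ 2 + 9 / 2) = 1 ->
  t * s ^ 3 <= 1 / 9.
Proof.
  intros Hs Ht H.
  (* With [c = s^2]: [(t s^3)^2 = c * c (1 - 9c/2) <= (2/9) * (1/18)]. *)
  assert (E : (t * s ^ 3) ^ 2 = (s ^ 2 * t ^ 2) * (s ^ 2) ^ 2) by ring.
  assert (A : s ^ 2 * t ^ 2 = 1 - 9 / 2 * s ^ 2) by lra.
  assert (0 <= s ^ 2 * t ^ 2) by (apply Rmult_le_pos; apply pow2_ge_0).
  set (c := s ^ 2) in *.
  assert (0 <= c) by (apply pow_le; lra).
  assert (0 <= (c - 1 / 9) ^ 2) by apply pow2_ge_0.
  assert ((t * s ^ 3) ^ 2 <= 1 / 81) by (rewrite E, A; nra).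
  assert (0 <= t * s ^ 3) by (apply Rmult_le_pos; [lra | apply pow_le; lra]).
  nra.
Qed.

Lemma Cmod_G5_gt (q t : R) : 0 <= q <= 1 -> 0 <= t <= w -> Cmod (G5 q t) > 0.147.
Proof.
  intros Hq Ht.
  assert (Hpoly := Cmod_G5_poly_ge q (Xof t) Hq).
  assert (Hsqr := Cmod_Xof_sqr t). rewrite w_sqr in Hsqr.
  assert (Hs2 := Cmod_Xof_sqr_le t).
  assert (Hs1 := Cmod_Xof_ge t Ht).
  rewrite Re_Xof in Hpoly.
  set (s := Cmod (Xof t)) in *.
  assert (Hcube := t_mul_cube_le s t ltac:(lra) ltac:(lra) Hsqr).
  assert (Hquintic := quintic_gt s Hs1 Hs2).
  apply Rlt_gt. eapply Rlt_le_trans; [| apply Hpoly; nra].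
  replace (s * (1 + - t * s ^ 2 - (s ^ 2 + s ^ 3 + s ^ 4)))
    with (s - s ^ 3 - s ^ 4 - s ^ 5 - t * s ^ 3) by ring.
  lra.
Qed.

Theorem lemma2 : forall q t : R, 0.6 <= q <= 1 -> 0 <= t <= w ->
  (exists S : C, is_series (V := C_NormedModule) (Gstar_term q t) S /\ Cmod S < 0.0208)
  /\ Cmod (G5 q t) > 0.147.
Proof.
  intros q t Hq Ht. split.
  - apply Gstar_series_small; lra.
  - apply Cmod_G5_gt; lra.
Qed.
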